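(* Let $\mathsf{Pk}$ be the finite set of packets and let $p$ be any ProbNetKAT program. Then for all $a,b \subseteq \mathsf{Pk}$, the limits defining the matrix semantics exist and \[ \mathcal{B}[\![p]\!]_{ab} = [\![p]\!](a)(\{b\}). \]
   Context: Fix finitely many fields $f_1,\dots,f_k$, each ranging over a finite set of natural numbers. A packet $\pi$ is a record assigning a value to each field; $\pi.f$ is the value of field $f$ and $\pi[f:=n]$ is $\pi$ with field $f$ updated to $n$. $\mathsf{Pk}$ is the finite set of all packets and $2^{\mathsf{Pk}}$ its powerset. Syntax. Predicates: $t ::= \mathsf{false} \mid \mathsf{true} \mid f=n \mid t \,\&\, u \mid t ; u \mid \neg t$ (disjunction, conjunction, negation). Programs: $p ::= t \mid f \leftarrow n \mid p \,\&\, q \mid p ; q \mid p \oplus_r q \mid p^*$ (filter, assignment, union/parallel composition, sequential composition, probabilistic choice with rational $r\in[0,1]$, iteration). Define $p^{(0)} := \mathsf{true}$ and $p^{(n+1)} := \mathsf{true} \,\&\, (p ; p^{(n)})$. Matrix semantics: $\mathcal{B}[\![p]\!] \in [0,1]^{2^{\mathsf{Pk}}\times 2^{\mathsf{Pk}}}$, with $[\varphi]\in\{0,1\}$ the Iverson bracket: $\mathcal{B}[\![\mathsf{false}]\!]_{ab}=[b=\emptyset]$; $\mathcal{B}[\![\mathsf{true}]\!]_{ab}=[a=b]$; $\mathcal{B}[\![f=n]\!]_{ab}=[b=\{\pi\in a : \pi.f=n\}]$; $\mathcal{B}[\![\neg t]\!]_{ab}=[b\subseteq a]\cdot \mathcal{B}[\![t]\!]_{a,a-b}$;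 $\mathcal{B}[\![f\leftarrow n]\!]_{ab}=[b=\{\pi[f:=n] : \pi\in a\}]$; $\mathcal{B}[\![p \,\&\, q]\!]_{ab}=\sum_{c,d}[c\cup d=b]\,\mathcal{B}[\![p]\!]_{ac}\,\mathcal{B}[\![q]\!]_{ad}$; $\mathcal{B}[\![p;q]\!]=\mathcal{B}[\![p]\!]\cdot\mathcal{B}[\![q]\!]$ (matrix product); $\mathcal{B}[\![p\oplus_r q]\!]=r\,\mathcal{B}[\![p]\!]+(1-r)\,\mathcal{B}[\![q]\!]$; $\mathcal{B}[\![p^*]\!]_{ab}=\lim_{n\to\infty}\mathcal{B}[\![p^{(n)}]\!]_{ab}$. Conjunction $t;u$ and disjunction $t\,\&\,u$ of predicates are interpreted as the corresponding program constructs. Denotational semantics: for a finite set $X$, $\mathcal{D}(X)$ is the set of probability distributions on $X$; $\delta_x$ is the Dirac distribution at $x$; for $g:X\to Y$, $\mathcal{D}(g)(\mu)=\mu\circ g^{-1}$ (pushforward); for $g:X\to\mathcal{D}(Y)$, $g^\dagger(\mu)(A)=\sum_{x\in X} g(x)(A)\,\mu(x)$; $\mu\times\nu$ is the product distribution. Order distributions on $2^{\mathsf{Pk}}$ by $\mu\sqsubseteq\nu$ iff $\mu(\{b : a\subseteq b\})\le\nu(\{b: a\subseteq b\})$ for all $a\subseteq\mathsf{Pk}$. Then $[\![p]\!]:2^{\mathsf{Pk}}\to\mathcal{D}(2^{\mathsf{Pk}})$ is: $[\![\mathsf{false}]\!](a)=\delta_\emptyset$; $[\![\mathsf{true}]\!](a)=\delta_a$;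 $[\![f=n]\!](a)=\delta_{\{\pi\in a:\pi.f=n\}}$; $[\![f\leftarrow n]\!](a)=\delta_{\{\pi[f:=n]:\pi\in a\}}$; $[\![\neg t]\!](a)=\mathcal{D}(\lambda b.\,a-b)([\![t]\!](a))$; $[\![p\,\&\,q]\!](a)=\mathcal{D}(\cup)([\![p]\!](a)\times[\![q]\!](a))$; $[\![p;q]\!](a)=[\![q]\!]^\dagger([\![p]\!](a))$; $[\![p\oplus_r q]\!](a)=r[\![p]\!](a)+(1-r)[\![q]\!](a)$; $[\![p^*]\!](a)=\bigsqcup_{n\in\mathbb{N}}[\![p^{(n)}]\!](a)$, the supremum of the $\sqsubseteq$-increasing chain. *)

From HB Require Import structures.
From mathcomp Require Import all_boot all_order all_algebra.
From mathcomp Require Import all_classical all_reals all_analysis.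
Set Implicit Arguments. Unset Strict Implicit. Unset Printing Implicit Defensive.
Import Order.TTheory GRing.Theory Num.Theory numFieldNormedType.Exports.
Local Open Scope ring_scope.

Section ProbNetKAT.
(* k fields; field i ranges over the finite set {0,...,sz i - 1} of naturals *)
Variables (k : nat) (sz : 'I_k -> nat).

Definition packet := {dffun forall i : 'I_k, 'I_(sz i)}.

Definition pk_get (pi : packet) (f : 'I_k) : 'I_(sz f) := pi f.
Definition pk_set (pi : packet) (f : 'I_k) (n : 'I_(sz f)) : packet :=
  @finfun _ (fun i : 'I_k => 'I_(sz i))
    (@dfwith _ (fun i : 'I_k => 'I_(sz i)) (fun j => pi j) f n).

Definition pkset := {set packet}.

Inductive pred :=
| PFalse : pred
| PTrue : pred
| PTest (f : 'I_k) (n : 'I_(sz f)) : pred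
| POr : pred -> pred -> pred
| PAnd : pred -> pred -> pred
| PNeg : pred -> pred.

Inductive prog :=
| Filter : pred -> prog
| Assign (f : 'I_k) (n : 'I_(sz f)) : prog
| Union : prog -> prog -> prog
| Seq : prog -> prog -> prog
| Choice (r : rat) : (0 <= r <= 1)%R -> prog -> prog -> prog
| Star : prog -> prog.

Definition set_test (f : 'I_k) (n : 'I_(sz f)) (a : pkset) : pkset :=
  [set pi in a | pk_get pi f == n].
Definition set_assign (f : 'I_k) (n : 'I_(sz f)) (a : pkset) : pkset :=
  [set pk_set pi n | pi in a].

Variable R : realType.

Definition mat := pkset -> pkset -> R.

Definition mat_id : mat := fun a b => (a == b)%:R.
Definition mat_union (M N : mat) : mat := fun a b =>
  \sum_(c : pkset) \sum_(d : pkset) ((c :|: d) == b)%:R * M a c * N a d.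
Definition mat_mul (M N : mat) : mat := fun a b =>
  \sum_(c : pkset) M a c * N c b.
Definition mat_choice (r : rat) (M N : mat) : mat := fun a b =>
  ratr r * M a b + (1 - ratr r) * N a b.

(* B[[p^(n)]] where p^(0) = true and p^(n+1) = true & (p ; p^(n)) *)
Fixpoint mat_iter (M : mat) (n : nat) : mat :=
  match n with
  | 0 => mat_id
  | n'.+1 => mat_union mat_id (mat_mul M (mat_iter M n'))
  end.

Fixpoint Bpred (t : pred) : mat :=
  match t with
  | PFalse => fun a b => (b == finset.set0)%:R
  | PTrue => mat_id
  | PTest f n => fun a b => (b == set_test n a)%:R
  | POr t u => mat_union (Bpred t) (Bpred u)
  | PAnd t u => mat_mul (Bpred t) (Bpred u)
  | PNeg t => fun a b => (b \subset a)%:R * Bpred t a (a :\: b)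
  end.

Fixpoint B (p : prog) : mat :=
  match p with
  | Filter t => Bpred t
  | Assign f n => fun a b => (b == set_assign n a)%:R
  | Union p q => mat_union (B p) (B q)
  | Seq p q => mat_mul (B p) (B q)
  | Choice r _ p q => mat_choice r (B p) (B q)
  | Star p => fun a b => limn (fun n => mat_iter (B p) n a b)
  end.

(* "the limits defining the matrix semantics exist": for every starred
   subprogram q* of p and all a b, the sequence B[[q^(n)]]_ab converges. *)
Fixpoint limits_exist (p : prog) : Prop :=
  match p with
  | Filter _ | Assign _ _ => True
  | Union p q | Seq p q | Choice _ _ p q => limits_exist p /\ limits_exist q
  | Star p => limits_exist p /\
      forall a b, cvgn (fun n => mat_iter (B p) n a b)
  end.

(** * Denotational semantics [[p]] : 2^Pk -> D(2^Pk)
    A distribution on the finite set 2^Pk is represented by its probability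
    mass function; mu(A) = \sum_(x in A) mu x. *)
Definition dist := {ffun pkset -> R}.

Definition is_dist (mu : dist) : Prop :=
  (forall x, 0 <= mu x) /\ \sum_x mu x = 1.

Definition measure_of (mu : dist) (A : {set pkset}) : R := \sum_(x in A) mu x.

Definition dirac (x : pkset) : dist := [ffun y => (y == x)%:R].

Definition push (g : pkset -> pkset) (mu : dist) : dist :=
  [ffun y => \sum_(x | g x == y) mu x].
Definition dunion (mu nu : dist) : dist :=
  [ffun c => \sum_(x : pkset) \sum_(y : pkset) ((x :|: y) == c)%:R * (mu x * nu y)].
Definition dbind (g : pkset -> dist) (mu : dist) : dist :=
  [ffun y => \sum_(x : pkset) g x y * mu x].
Definition dchoice (r : rat) (mu nu : dist) : dist :=
  [ffun y => ratr r * mu y + (1 - ratr r) * nu y].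

Definition dle (mu nu : dist) : Prop :=
  forall a : pkset, measure_of mu (finset (fun b : pkset => a \subset b))
                   <= measure_of nu (finset (fun b : pkset => a \subset b)).

Definition is_sup (c : nat -> dist) (mu : dist) : Prop :=
  is_dist mu /\ (forall n, dle (c n) mu) /\
  (forall nu, is_dist nu -> (forall n, dle (c n) nu) -> dle mu nu).

Definition dsup (c : nat -> dist) : dist := xget (dirac finset.set0) (is_sup c).

Definition kleisli_id : pkset -> dist := dirac.

Fixpoint den_iter (g : pkset -> dist) (n : nat) : pkset -> dist :=
  match n with
  | 0 => dirac
  | n'.+1 => fun a => dunion (dirac a) (dbind (den_iter g n') (g a))
  end.

Fixpoint Dpred (t : pred) : pkset -> dist :=
  match t with
  | PFalse => fun _ => dirac finset.set0
  | PTrue => dirac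
  | PTest f n => fun a => dirac (set_test n a)
  | POr t u => fun a => dunion (Dpred t a) (Dpred u a)
  | PAnd t u => fun a => dbind (Dpred u) (Dpred t a)
  | PNeg t => fun a => push (fun b => a :\: b) (Dpred t a)
  end.

Fixpoint D (p : prog) : pkset -> dist :=
  match p with
  | Filter t => Dpred t
  | Assign f n => fun a => dirac (set_assign n a)
  | Union p q => fun a => dunion (D p a) (D q a)
  | Seq p q => fun a => dbind (D q) (D p a)
  | Choice r _ p q => fun a => dchoice r (D p a) (D q a)
  | Star p => fun a => dsup (fun n => den_iter (D p) n a)
  end.

End ProbNetKAT.

From Pilot Require Import Defs.
From HB Require Import structures.
From mathcomp Require Import all_boot all_order all_algebra.
From mathcomp Require Import all_classical all_reals all_analysis.
From mathcomp Require Import ring.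
Set Implicit Arguments. Unset Strict Implicit. Unset Printing Implicit Defensive.
Import Order.TTheory GRing.Theory Num.Theory numFieldNormedType.Exports.
Local Open Scope ring_scope.
Local Open Scope classical_set_scope.

(* Predicates are deterministic: both semantics send a to the Dirac mass at
   a single set.  For the other constructs, and for every finite iterate
   p^(n), the matrix formula is the denotational one written out pointwise.
   For p^*, a distribution on 2^Pk is determined by its upper sums
   mu({b | c ⊆ b}), because mu(c) is the upper sum at c minus the masses of
   the proper supersets of c.  The iterates of p^* form a ⊑-chain, so their
   upper sums increase and are bounded by 1, hence converge; by the inversion
   the point masses converge too, and the pointwise limit is a distribution
   that is the ⊑-least upper bound, hence (⊑ being antisymmetric) the
   supremum taken by the denotational semantics. *)

Lemma sum_indicator (R : pzSemiRingType) (T : finType) (e : T) (F : T -> R) :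
  \sum_(c : T) (c == e)%:R * F c = F e.
Proof.
transitivity (\sum_(c | c == e) F c); last exact: big_pred1_eq.
by rewrite [RHS]big_mkcond; apply: eq_bigr => c _; rewrite mulr_natl mulrb.
Qed.

Lemma sum_indicator_pred {R : pzSemiRingType} (T : finType) (P : {pred T}) (w : T) :
  \sum_(z | P z) (w == z)%:R = (P w)%:R :> R.
Proof.
rewrite big_mkcond -(sum_indicator w (fun z => (P z)%:R : R)).
by apply: eq_bigr => z _; rewrite eq_sym -natrM mulnb andbC; case: (P z).
Qed.

Lemma proper_superset_ind (T : finType) (P : {set T} -> Prop) :
  (forall a : {set T}, (forall b : {set T}, a \proper b -> P b) -> P a) ->
  forall a, P a.
Proof.
move=> IH; suff Pn : forall n a, (#|~: a| < n)%N -> P a.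
  by move=> a; exact: (Pn _ a (ltnSn _)).
elim=> // n IHn a lt_a; apply: IH => b ab; apply: IHn.
by rewrite -properC in ab; exact: leq_trans (proper_card ab) lt_a.
Qed.

Section UpperSums.
Variables (T : finType) (R : zmodType).
Implicit Types (f g : {set T} -> R) (a c : {set T}).

Definition upsum f c : R := \sum_(b : {set T} | c \subset b) f b.

Lemma upsum_proper f c : upsum f c = f c + \sum_(b : {set T} | c \proper b) f b.
Proof.
rewrite /upsum (bigD1 c) ?subxx //=; congr (_ + _).
by apply: eq_bigl => b; rewrite finset.properEneq eq_sym andbC.
Qed.

Lemma upsum_set0 f : upsum f finset.set0 = \sum_(b : {set T}) f b.
Proof. by rewrite /upsum; apply: eq_bigl => b; rewrite finset.sub0set. Qed.

Lemma upsum_inj f g : upsum f =1 upsum g -> f =1 g.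
Proof.
move=> fg; apply: proper_superset_ind => c IH.
have proper_eq :
    \sum_(b : {set T} | c \proper b) f b = \sum_(b : {set T} | c \proper b) g b.
  exact: eq_bigr.
by move: (fg c); rewrite !upsum_proper proper_eq => /addIr.
Qed.

End UpperSums.

Section Convergence.
Variable R : numFieldType.

Lemma cvgn_sum (I : finType) (P : {pred I}) (f : I -> nat -> R) (l : I -> R) :
  (forall i, P i -> f i n @[n --> \oo] --> l i) ->
  (\sum_(i | P i) f i n) @[n --> \oo] --> \sum_(i | P i) l i.
Proof. by move=> fl; apply: cvg_big => //; exact: add_continuous. Qed.

Lemma is_cvgn_sum (I : finType) (P : {pred I}) (f : I -> nat -> R) :
  (forall i, P i -> cvgn (f i)) -> cvgn (fun n => \sum_(i | P i) f i n).
Proof.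
move=> fc; apply/cvg_ex; exists (\sum_(i | P i) limn (f i)).
by apply: cvgn_sum => i /fc.
Qed.

Lemma is_cvgn_of_upsum (T : finType) (f_ : nat -> {set T} -> R) :
  (forall c, cvgn (fun n => upsum (f_ n) c)) -> forall b, cvgn (fun n => f_ n b).
Proof.
move=> up_cvg; apply: proper_superset_ind => b IH.
have -> : (fun n => f_ n b) =
    (fun n => upsum (f_ n) b - \sum_(c : {set T} | b \proper c) f_ n c).
  by apply: funext => n; rewrite upsum_proper addrK.
by apply: is_cvgB; [exact: up_cvg | exact: is_cvgn_sum].
Qed.

End Convergence.

Section Distributions.
Variables (k : nat) (sz : 'I_k -> nat) (R : realType).
Local Notation pkset := (pkset sz).
Local Notation dist := (dist sz R).
Local Notation dirac := (@Defs.dirac k sz R).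
Implicit Types (mu nu : dist) (a c x y : pkset) (g : pkset -> dist).

Lemma diracE x y : dirac x y = (y == x)%:R.
Proof. by rewrite ffunE. Qed.

Lemma dle_upsum mu nu : dle mu nu <-> forall c, upsum mu c <= upsum nu c.
Proof.
suff upE c (m : dist) :
    measure_of m (finset (fun b : pkset => c \subset b)) = upsum m c.
  by rewrite /dle; split=> le_mn c; [rewrite -!upE | rewrite !upE].
by apply: eq_bigl => b; rewrite inE.
Qed.

Lemma dle_anti mu nu : dle mu nu -> dle nu mu -> mu = nu.
Proof.
move=> /dle_upsum mn /dle_upsum nm; apply/ffunP; apply: upsum_inj => c.
by apply/eqP; rewrite eq_le mn nm.
Qed.

Lemma is_dist_dirac x : is_dist (dirac x).
Proof.
split=> [y|]; first by rewrite diracE ler0n.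
rewrite -(sum_indicator x (fun _ => 1 : R)).
by apply: eq_bigr => y _; rewrite diracE mulr1.
Qed.

Lemma is_dist_dunion mu nu : is_dist mu -> is_dist nu -> is_dist (dunion mu nu).
Proof.
move=> [mu_ge0 mu_sum1] [nu_ge0 nu_sum1]; split=> [c|].
  rewrite ffunE; apply: sumr_ge0 => x _; apply: sumr_ge0 => y _.
  by rewrite mulr_ge0 ?ler0n // mulr_ge0.
under eq_bigr do rewrite ffunE.
rewrite exchange_big /=; under eq_bigr do rewrite exchange_big /=.
under eq_bigr do under eq_bigr do rewrite -big_distrl /= sum_indicator_pred mul1r.
by rewrite -big_distrlr /= mu_sum1 nu_sum1 mulr1.
Qed.

Lemma is_dist_dbind g mu :
  (forall x, is_dist (g x)) -> is_dist mu -> is_dist (dbind g mu).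
Proof.
move=> g_dist [mu_ge0 mu_sum1]; split=> [y|].
  by rewrite ffunE; apply: sumr_ge0 => x _; rewrite mulr_ge0 //; case: (g_dist x).
under eq_bigr do rewrite ffunE.
rewrite exchange_big /= -mu_sum1; apply: eq_bigr => x _.
by rewrite -mulr_suml; case: (g_dist x) => _ ->; rewrite mul1r.
Qed.

Lemma is_dist_dchoice r mu nu : (0 <= r <= 1)%R ->
  is_dist mu -> is_dist nu -> is_dist (dchoice r mu nu).
Proof.
move=> /andP[r_ge0 r_le1] [mu_ge0 mu_sum1] [nu_ge0 nu_sum1].
have ratr_ge0 : 0 <= ratr r :> R by rewrite ler0q.
have ratr_le1 : ratr r <= 1 :> R by rewrite -(rmorph1 (ratr : rat -> R)) ler_rat.
split=> [y|].
  by rewrite ffunE addr_ge0 // mulr_ge0 // subr_ge0.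
under eq_bigr do rewrite ffunE.
by rewrite big_split /= -!mulr_sumr mu_sum1 nu_sum1; ring.
Qed.

Lemma dunion_dirac x y : dunion (dirac x) (dirac y) = dirac (x :|: y).
Proof.
apply/ffunP => c; rewrite ffunE diracE.
transitivity (\sum_x' (x' == x)%:R * ((x' :|: y) == c)%:R : R); last first.
  by rewrite sum_indicator eq_sym.
apply: eq_bigr => x' _.
rewrite -(sum_indicator y (fun y' => (x' == x)%:R * ((x' :|: y') == c)%:R)).
by apply: eq_bigr => y' _; rewrite !diracE; ring.
Qed.

Lemma dbind_diracl g x : dbind g (dirac x) = g x.
Proof.
apply/ffunP => y; rewrite ffunE -(sum_indicator x (fun x' => g x' y)).
by apply: eq_bigr => x' _; rewrite diracE mulrC.
Qed.

Lemma dbind_diracr mu : dbind dirac mu = mu.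
Proof.
apply/ffunP => y; rewrite ffunE -(sum_indicator y mu).
by apply: eq_bigr => x _; rewrite diracE eq_sym.
Qed.

Lemma upsum_dirac x c : upsum (dirac x) c = (c \subset x)%:R.
Proof.
rewrite -(sum_indicator_pred [pred b : pkset | c \subset b] x).
by apply: eq_bigr => b _; rewrite diracE eq_sym.
Qed.

Lemma upsum_dbind g mu c : upsum (dbind g mu) c = \sum_x upsum (g x) c * mu x.
Proof.
rewrite /upsum; under eq_bigr do rewrite ffunE.
by rewrite exchange_big /=; apply: eq_bigr => x _; rewrite mulr_suml.
Qed.

Lemma upsum_dunion_dirac a nu c :
  upsum (dunion (dirac a) nu) c = upsum nu (c :\: a).
Proof.
have dunionE z : dunion (dirac a) nu z = \sum_y ((a :|: y) == z)%:R * nu y.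
  rewrite ffunE -(sum_indicator a (fun x => \sum_y ((x :|: y) == z)%:R * nu y)).
  apply: eq_bigr => x _; rewrite mulr_sumr.
  by apply: eq_bigr => y _; rewrite diracE; ring.
rewrite /upsum; under eq_bigr do rewrite dunionE.
rewrite exchange_big [RHS]big_mkcond /=; apply: eq_bigr => y _.
rewrite -mulr_suml (sum_indicator_pred [pred z : pkset | c \subset z]) /= subDset.
by case: ifP; rewrite ?mul1r ?mul0r.
Qed.

Lemma upsum_ge0 mu c : is_dist mu -> 0 <= upsum mu c.
Proof. by case=> mu_ge0 _; apply: sumr_ge0. Qed.

Lemma upsum_le1 mu c : is_dist mu -> upsum mu c <= 1.
Proof.
case=> mu_ge0 <-; rewrite [X in _ <= X](bigID (fun b : pkset => c \subset b)) /=.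
by rewrite lerDl; apply: sumr_ge0.
Qed.

Lemma upsum_dist_set0 mu : is_dist mu -> upsum mu finset.set0 = 1.
Proof. by case=> _ <-; rewrite upsum_set0. Qed.

End Distributions.

Section Iteration.
Variables (k : nat) (sz : 'I_k -> nat) (R : realType).
Local Notation pkset := (pkset sz).
Local Notation dist := (dist sz R).
Variable g : pkset -> dist.
Hypothesis g_dist : forall x, is_dist (g x).

Lemma is_dist_den_iter n a : is_dist (den_iter g n a).
Proof.
elim: n a => [|n IH] a /=; first exact: is_dist_dirac.
by apply: is_dist_dunion; [exact: is_dist_dirac | exact: is_dist_dbind].
Qed.

Lemma upsum_den_iter_nondecreasing a c :
  nondecreasing_seq (fun n => upsum (den_iter g n a) c).
Proof.
apply/nondecreasing_seqP => n; elim: n a c => [|n IH] a c.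
  rewrite /= upsum_dunion_dirac dbind_diracr upsum_dirac.
  have [|_] := boolP (c \subset a); last exact: upsum_ge0.
  by rewrite -finset.setD_eq0 => /eqP ->; rewrite upsum_dist_set0.
rewrite [den_iter g n.+1 a]/= [den_iter g n.+2 a]/= !upsum_dunion_dirac !upsum_dbind.
by apply: ler_sum => x _; apply: ler_wpM2r; [case: (g_dist a) | exact: IH].
Qed.

Variable a : pkset.

Lemma is_cvgn_upsum_den_iter c : cvgn (fun n => upsum (den_iter g n a) c).
Proof.
apply: nondecreasing_is_cvgn; first exact: upsum_den_iter_nondecreasing.
by exists 1 => _ [n _ <-]; exact: upsum_le1 (is_dist_den_iter n a).
Qed.

Lemma is_cvgn_den_iter b : cvgn (fun n => den_iter g n a b).
Proof. exact: (is_cvgn_of_upsum is_cvgn_upsum_den_iter). Qed.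

Definition den_lim : dist := [ffun b => limn (fun n => den_iter g n a b)].

Lemma upsum_den_lim c :
  upsum (den_iter g n a) c @[n --> \oo] --> upsum den_lim c.
Proof.
rewrite /upsum; under [X in _ --> X]eq_bigr do rewrite ffunE.
by apply: cvgn_sum => b _; exact: is_cvgn_den_iter.
Qed.

Lemma is_sup_den_lim : is_sup (fun n => den_iter g n a) den_lim.
Proof.
have lim_upsum c : limn (fun n => upsum (den_iter g n a) c) = upsum den_lim c.
  exact: (cvg_lim (@Rhausdorff R) (upsum_den_lim (c:=c))).
split; [split | split].
- move=> b; rewrite ffunE; apply: limr_ge; first exact: is_cvgn_den_iter.
  by apply: nearW => n; case: (is_dist_den_iter n a).
- rewrite -upsum_set0 -lim_upsum.
  have -> : (fun n => upsum (den_iter g n a) finset.set0) = fun=> 1.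
    by apply: funext => n; exact: upsum_dist_set0 (is_dist_den_iter n a).
  exact: lim_cst.
- move=> n; apply/dle_upsum => c; rewrite -lim_upsum.
  apply: nondecreasing_cvgn_le; last exact: is_cvgn_upsum_den_iter.
  exact: upsum_den_iter_nondecreasing.
- move=> nu _ ub; apply/dle_upsum => c; rewrite -lim_upsum.
  apply: limr_le; first exact: is_cvgn_upsum_den_iter.
  by apply: nearW => n; apply: (dle_upsum _ _).1.
Qed.

Lemma dsup_den_iter : dsup (fun n => den_iter g n a) = den_lim.
Proof.
apply: xget_unique; first exact: is_sup_den_lim.
move=> mu [mu_dist [mu_ub mu_least]].
have [lim_dist [lim_ub lim_least]] := is_sup_den_lim.
by apply: dle_anti; [exact: mu_least | exact: lim_least].
Qed.

End Iteration.

Lemma setDDK (T : finType) (a x : {set T}) : x \subset a -> a :\: (a :\: x) = x.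
Proof.
by move=> xa; rewrite finset.setDDr finset.setDv finset.set0U; exact/finset.setIidPr.
Qed.

Lemma eq_relative_compl (T : finType) (a b x : {set T}) : x \subset a ->
  (b \subset a) && (a :\: b == x) = (b == a :\: x).
Proof.
move=> xa; apply/idP/eqP => [/andP[ba /eqP <-]|->]; first by rewrite setDDK.
by rewrite finset.subsetDl setDDK ?eqxx.
Qed.

Section Predicates.
Variables (k : nat) (sz : 'I_k -> nat) (R : realType).
Local Notation pkset := (pkset sz).

Fixpoint eval_pred (t : Defs.pred sz) (a : pkset) : pkset :=
  match t with
  | PFalse => finset.set0
  | PTrue => a
  | PTest f n => set_test n a
  | POr t u => eval_pred t a :|: eval_pred u a
  | PAnd t u => eval_pred u (eval_pred t a)
  | PNeg t => a :\: eval_pred t a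
  end.

Lemma eval_pred_sub t a : eval_pred t a \subset a.
Proof.
elim: t a => [|| f n | t IHt u IHu | t IHt u IHu | t IHt] a /=.
- exact: finset.sub0set.
- exact: subxx.
- by apply/fintype.subsetP => x; rewrite inE => /andP[].
- by rewrite finset.subUset IHt IHu.
- exact: fintype.subset_trans (IHu _) (IHt _).
- exact: finset.subsetDl.
Qed.

Lemma Dpred_eval t a : Dpred R t a = Defs.dirac R (eval_pred t a).
Proof.
elim: t a => [|| f n | t IHt u IHu | t IHt u IHu | t IHt] a //=.
- by rewrite IHt IHu dunion_dirac.
- by rewrite IHt dbind_diracl IHu.
- apply/ffunP => b; rewrite IHt ffunE diracE.
  under eq_bigr do rewrite diracE eq_sym.
  by rewrite (sum_indicator_pred [pred x : pkset | a :\: x == b]) /= eq_sym.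
Qed.

Lemma Bpred_eval t a b : Bpred R t a b = (b == eval_pred t a)%:R.
Proof.
elim: t a b => [|| f n | t IHt u IHu | t IHt u IHu | t IHt] a b //=.
- by rewrite /mat_id eq_sym.
- rewrite /mat_union.
  under eq_bigr do under eq_bigr do rewrite IHt IHu.
  transitivity (\sum_c (c == eval_pred t a)%:R * ((c :|: eval_pred u a) == b)%:R : R).
    apply: eq_bigr => c _.
    rewrite -(sum_indicator (eval_pred u a)
      (fun d => (c == eval_pred t a)%:R * ((c :|: d) == b)%:R)).
    by apply: eq_bigr => d _; ring.
  by rewrite sum_indicator eq_sym.
- by rewrite /mat_mul; under eq_bigr do rewrite IHt IHu; rewrite sum_indicator.
- by rewrite IHt -natrM mulnb eq_relative_compl ?eval_pred_sub.
Qed.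

End Predicates.

Section Soundness.
Variables (k : nat) (sz : 'I_k -> nat) (R : realType).
Local Notation pkset := (pkset sz).

Lemma is_dist_D (p : prog sz) a : is_dist (D R p a).
Proof.
elim: p a => [t|f n|p IHp q IHq|p IHp q IHq|r r01 p IHp q IHq|p IHp] a /=.
- by rewrite Dpred_eval; exact: is_dist_dirac.
- exact: is_dist_dirac.
- exact: is_dist_dunion.
- exact: is_dist_dbind.
- exact: is_dist_dchoice.
- by rewrite dsup_den_iter //; case: (is_sup_den_lim IHp a).
Qed.

Lemma mat_iter_den_iter (M : pkset -> pkset -> R) (g : pkset -> dist sz R) :
  (forall a b, M a b = g a b) -> forall n a b, mat_iter M n a b = den_iter g n a b.
Proof.
move=> Mg; elim=> [|n IH] a b /=; first by rewrite diracE /mat_id eq_sym.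
rewrite /mat_union ffunE; apply: eq_bigr => x _; apply: eq_bigr => y _.
rewrite diracE /mat_id /mat_mul ffunE -mulrA [a == x]eq_sym.
by congr (_ * (_ * _)); apply: eq_bigr => z _; rewrite Mg IH mulrC.
Qed.

Lemma B_eq_D (p : prog sz) :
  limits_exist R p /\ forall a b, B R p a b = D R p a b.
Proof.
elim: p => [t|f n|p [lp Bp] q [lq Bq]|p [lp Bp] q [lq Bq]
           |r r01 p [lp Bp] q [lq Bq]|p [lp Bp]].
- by split=> // a b; rewrite /= Dpred_eval Bpred_eval diracE.
- by split=> // a b; rewrite /= diracE.
- split=> // a b; rewrite /= ffunE; apply: eq_bigr => c _; apply: eq_bigr => d _.
  by rewrite Bp Bq mulrA.
- by split=> // a b; rewrite /= ffunE; apply: eq_bigr => c _; rewrite Bp Bq mulrC.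
- by split=> // a b; rewrite /= /mat_choice ffunE Bp Bq.
- have iterE a b n : mat_iter (B R p) n a b = den_iter (D R p) n a b.
    exact: mat_iter_den_iter.
  split.
    split=> // a b; rewrite (eq_is_cvg _ (iterE a b)).
    exact (is_cvgn_den_iter (is_dist_D p) (a:=a) (b:=b)).
  move=> a b /=; under eq_fun do rewrite iterE.
  by rewrite dsup_den_iter ?ffunE //; exact: is_dist_D.
Qed.

End Soundness.

Theorem theorem3p1 (k : nat) (sz : 'I_k -> nat) (R : realType)
    (p : prog sz) :
  limits_exist R p /\
  forall a b : pkset sz, B R p a b = measure_of (D R p a) (finset.set1 b).
Proof.
have [lim_p BD] := B_eq_D R p.
by split=> // a b; rewrite BD /measure_of big_set1.
Qed.
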